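(* Every unary FA-presentable quasi-order $(X,\le)$ decomposes as a finite disjoint union of trivial quasi-orders, countably infinite ascending chains, countably infinite descending chains, countably infinite anti-chains, and countably infinite strongly connected components; that is, $X$ can be partitioned into finitely many subsets, each of which, with the induced quasi-order, is either a one-element quasi-order, or a countably infinite set $\{x_1,x_2,\dots\}$ with $x_i\le x_j$ iff $i\le j$ (ascending chain), or one with $x_i\le x_j$ iff $i\ge j$ (descending chain), or a countably infinite set in which $x\le y$ only if $x=y$ (anti-chain), or a countably infinite set in which $x\le y$ for all $x,y$ (strongly connected component).
   Context: A quasi-order is a reflexive transitive binary relation. A structure $(X,\le)$ is unary FA-presentable if there exist a regular language $L\subseteq a^*$ over a one-letter alphabet and a surjection $\phi:L\to X$ such that both $\{(u,v)\in L^2: u\phi=v\phi\}$ and $\{(u,v)\in L^2:u\phi\le v\phi\}$ are regular relations, i.e. the corresponding sets of words $\mathrm{conv}(u,v)$ over $\{a,\$\}^2$ (reading $u$ and $v$ in parallel, padding the shorter with $\$$) are regular languages. *)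

From mathcomp Require Import all_boot.
Set Implicit Arguments. Unset Strict Implicit. Unset Printing Implicit Defensive.

Definition regular (A : finType) (P : seq A -> Prop) : Prop :=
  exists (Q : finType) (q0 : Q) (d : Q -> A -> Q) (F : pred Q),
    forall w : seq A, P w <-> F (foldl d q0 w).

Definition unary_word (n : nat) : seq unit := nseq n tt.

(* Two-track alphabet {a,$}^2 is [bool * bool] (true = a, false = $).
   conv(a^m, a^n): length max(m,n), position i carries (i<m ? a : $, i<n ? a : $). *)
Definition conv (m n : nat) : seq (bool * bool) :=
  mkseq (fun i => (i < m, i < n)) (maxn m n).

Definition unary_lang (L : nat -> Prop) : seq unit -> Prop :=
  fun w => exists n, L n /\ w = unary_word n.

Definition conv_lang (L : nat -> Prop) (R : nat -> nat -> Prop)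
  : seq (bool * bool) -> Prop :=
  fun w => exists m n, L m /\ L n /\ R m n /\ w = conv m n.

Definition unary_FA_presentable (X : Type) (le : X -> X -> Prop) : Prop :=
  exists (L : nat -> Prop) (phi : nat -> X),
    regular (unary_lang L) /\
    (forall x : X, exists n, L n /\ phi n = x) /\
    regular (conv_lang L (fun m n => phi m = phi n)) /\
    regular (conv_lang L (fun m n => le (phi m) (phi n))).

Definition quasi_order (X : Type) (le : X -> X -> Prop) : Prop :=
  (forall x, le x x) /\ (forall x y z, le x y -> le y z -> le x z).

Definition enumerates (X : Type) (P : X -> Prop) (f : nat -> X) : Prop :=
  (forall i j, f i = f j -> i = j) /\ (forall y, P y <-> exists i, f i = y).

Definition trivial_part (X : Type) (le : X -> X -> Prop) (P : X -> Prop) :=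
  exists x, forall y, P y <-> y = x.

Definition asc_chain_part (X : Type) (le : X -> X -> Prop) (P : X -> Prop) :=
  exists f, enumerates P f /\ forall i j, le (f i) (f j) <-> i <= j.

Definition desc_chain_part (X : Type) (le : X -> X -> Prop) (P : X -> Prop) :=
  exists f, enumerates P f /\ forall i j, le (f i) (f j) <-> j <= i.

Definition antichain_part (X : Type) (le : X -> X -> Prop) (P : X -> Prop) :=
  (exists f, enumerates P f) /\ forall x y, P x -> P y -> le x y -> x = y.

Definition scc_part (X : Type) (le : X -> X -> Prop) (P : X -> Prop) :=
  (exists f, enumerates P f) /\ forall x y, P x -> P y -> le x y.

Definition admissible_part (X : Type) (le : X -> X -> Prop) (P : X -> Prop) :=
  trivial_part le P \/ asc_chain_part le P \/ desc_chain_part le P \/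
  antichain_part le P \/ scc_part le P.

(* Reading a^n or conv(a^m, a^n) through a DFA with state set Q factors through
   the blocks of equal letters, and beyond #|Q| letters every block can be
   lengthened by P = N! (any N >= #|Q|) without changing acceptance.  So the
   domain, the equality and the order of a unary presentation are all
   eventually P-periodic, and so is the set of least representatives of the
   elements.  Grouping these representatives by residue modulo P past the
   threshold leaves finitely many singletons and finitely many arithmetic
   progressions, and on a progression the order between two terms only depends
   on which one comes first: the four possible answers give the four kinds of
   infinite parts. *)

From mathcomp Require Import all_boot boolp zify.
Set Implicit Arguments. Unset Strict Implicit.

Definition eventually_periodic (A : nat -> Prop) (T P : nat) : Prop :=
  forall n, T <= n -> A (n + P) <-> A n.

Lemma eventually_periodicM (A : nat -> Prop) T P :
  eventually_periodic A T P -> forall n i, T <= n -> A (n + i * P) <-> A n.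
Proof.
move=> per n i le_Tn; elim: i => [|i IH]; first by rewrite mul0n addn0.
by rewrite mulSnr addnA per ?IH //; lia.
Qed.

(* The three regimes of conv(a^m, a^n): both words are long, or only the
   longer one is pumped while the shorter one stays fixed. *)
Definition conv_periodic (S : nat -> nat -> Prop) (N P : nat) : Prop :=
  (forall m n, N <= minn m n -> S (m + P) (n + P) <-> S m n) /\
  (forall m n, n + N <= m -> S (m + P) n <-> S m n) /\
  (forall m n, m + N <= n -> S m (n + P) <-> S m n).

Lemma conv_periodic_flip (S : nat -> nat -> Prop) N P :
  conv_periodic S N P -> conv_periodic (fun m n => S n m) N P.
Proof.
move=> [diag [left right]]; split; [|split] => m n le_mn /=.
- by apply: diag; rewrite minnC.
- exact: right.
- exact: left.
Qed.

Lemma conv_periodic_progression (S : nat -> nat -> Prop) N P b :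
  conv_periodic S N P -> N <= b -> N <= P ->
  forall i j, i < j -> S (b + i * P) (b + j * P) <-> S b (b + P).
Proof.
move=> [diag [_ right]] le_Nb le_NP i j lt_ij.
have shift_both : eventually_periodic (fun n => S n (n + (j - i) * P)) N P.
  by move=> n le_Nn /=; rewrite addnAC diag //; lia.
have shift_right : eventually_periodic (S b) (b + N) P by move=> n; apply: right.
have -> : b + j * P = b + i * P + (j - i) * P by rewrite -addnA -mulnDl subnKC // ltnW.
apply: iff_trans (eventually_periodicM shift_both _ le_Nb) _ => /=.
have -> : b + (j - i) * P = b + P + (j - i).-1 * P by rewrite -addnA -mulSn prednK // subn_gt0.
by apply: (eventually_periodicM shift_right); lia.
Qed.

Lemma iter_add_fact (Q : finType) (f : Q -> Q) (q : Q) N k :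
  #|Q| <= N -> #|Q| <= k -> iter (k + N`!) f q = iter k f q.
Proof.
move=> le_QN le_Qk; have /trajectP[i lt_ij iter_ji] := looping_order f q.
set j := order f q in lt_ij iter_ji; have le_jQ : j <= #|Q| := max_card _.
have loop m : i <= m -> iter (m + (j - i)) f q = iter m f q.
  move=> le_im; have -> : m + (j - i) = m - i + j by lia.
  by rewrite iterD iter_ji -iterD subnK.
have /dvdnP[c ->] : (j - i) %| N`! by apply: dvdn_fact; lia.
elim: c => [|c IH]; first by rewrite addn0.
by rewrite mulSnr addnA loop ?IH //; lia.
Qed.

Lemma foldl_nseq (A S : Type) (d : S -> A -> S) (a : A) n q :
  foldl d q (nseq n a) = iter n (fun s => d s a) q.
Proof. by elim: n q => [|n IH] q //; rewrite iterSr -IH. Qed.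

Lemma conv_nseq m n :
  conv m n = nseq (minn m n) (true, true) ++ nseq (m - n) (true, false)
             ++ nseq (n - m) (false, true).
Proof.
apply: (eq_from_nth (x0 := (false, false))).
  by rewrite /conv size_mkseq !size_cat !size_nseq; lia.
move=> i; rewrite /conv size_mkseq => lt_i; rewrite nth_mkseq //.
rewrite !nth_cat !size_nseq !nth_nseq.
by repeat case: ifP => ?; f_equal; lia.
Qed.

Lemma conv_inj m n m' n' : conv m n = conv m' n' -> m = m' /\ n = n'.
Proof.
move=> eq_conv.
have count1 a b : count (fun p : bool * bool => p.1) (conv a b) = a.
  by rewrite conv_nseq !count_cat !count_nseq /=; lia.
have count2 a b : count (fun p : bool * bool => p.2) (conv a b) = b.
  by rewrite conv_nseq !count_cat !count_nseq /=; lia.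
by split; [rewrite -(count1 m n) eq_conv count1 | rewrite -(count2 m n) eq_conv count2].
Qed.

Lemma regular_unary_periodic (L : nat -> Prop) :
  regular (unary_lang L) ->
  exists N0, forall N, N0 <= N -> eventually_periodic L N N`!.
Proof.
case=> Q [q0 [d [F accF]]]; exists #|Q| => N le_QN n le_Nn.
have runL k : L k <-> F (iter k (fun s => d s tt) q0).
  rewrite -foldl_nseq -accF; split=> [Lk | [k' [Lk' eq_k]]]; first by exists k.
  by have := congr1 size eq_k; rewrite !size_nseq => ->.
by rewrite !runL iter_add_fact //; lia.
Qed.

Lemma regular_conv_periodic (L : nat -> Prop) (R : nat -> nat -> Prop) :
  regular (conv_lang L R) ->
  exists N0, forall N, N0 <= N -> conv_periodic (fun m n => L m /\ L n /\ R m n) N N`!.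
Proof.
case=> Q [q0 [d [F accF]]]; exists #|Q| => N le_QN.
pose run a b c := iter c (d^~ (false, true)) (iter b (d^~ (true, false))
                    (iter a (d^~ (true, true)) q0)).
have runS m n : (L m /\ L n /\ R m n) <-> F (run (minn m n) (m - n) (n - m)).
  rewrite /run -!foldl_nseq -!foldl_cat -conv_nseq -accF.
  split=> [[Lm [Ln Rmn]] | [m' [n' [Lm' [Ln' [Rmn' /conv_inj[-> ->]]]]]]] //.
  by exists m, n.
set P := N`!; split; [|split] => m n le_mn; rewrite !runS.
- have -> : minn (m + P) (n + P) = minn m n + P by lia.
  have -> : m + P - (n + P) = m - n by lia.
  have -> : n + P - (m + P) = n - m by lia.
  by rewrite /run iter_add_fact //; lia.
- have -> : minn (m + P) n = minn m n by lia.
  have -> : m + P - n = m - n + P by lia.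
  have -> : n - (m + P) = n - m by lia.
  by rewrite /run iter_add_fact //; lia.
- have -> : minn m (n + P) = minn m n by lia.
  have -> : m - (n + P) = m - n by lia.
  have -> : n + P - m = n - m + P by lia.
  by rewrite /run iter_add_fact //; lia.
Qed.

Definition partition_by (X : Type) (A : (X -> Prop) -> Prop) (k : nat)
    (part : nat -> X -> Prop) : Prop :=
  (forall x, exists i, i < k /\ part i x) /\
  (forall i j x, i < k -> j < k -> part i x -> part j x -> i = j) /\
  (forall i, i < k -> A (part i)).

Lemma partition_by_nonempty (X : Type) (A : (X -> Prop) -> Prop) k
    (Q : nat -> X -> Prop) :
  (forall x, exists j, j < k /\ Q j x) ->
  (forall j j' x, j < k -> j' < k -> Q j x -> Q j' x -> j = j') ->
  (forall j, j < k -> (exists x, Q j x) -> A (Q j)) ->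
  exists k' part, partition_by A k' part.
Proof.
move=> cover disj adm.
pose s := [seq j <- iota 0 k | `[< exists x, Q j x >]].
have memsP i : i < size s -> nth 0 s i < k /\ exists x, Q (nth 0 s i) x.
  by move/(mem_nth 0); rewrite mem_filter mem_iota => /andP[/asboolP ne /andP[_ lt]].
exists (size s), (fun i => Q (nth 0 s i)); split; [|split].
- move=> x; have [j [lt_jk Qjx]] := cover x.
  have js : j \in s.
    by rewrite mem_filter mem_iota; apply/andP; split; [apply/asboolP; exists x | lia].
  by exists (index j s); rewrite index_mem nth_index.
- move=> i i' x lt_i lt_i' Qi Qi'; apply/eqP.
  rewrite -(nth_uniq 0 lt_i lt_i') ?filter_uniq ?iota_uniq //; apply/eqP.
  exact: (disj _ _ x (memsP i lt_i).1 (memsP i' lt_i').1).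
- by move=> i /memsP[lt ne]; apply: adm.
Qed.

Lemma admissible_of_sign_order (X : Type) (le : X -> X -> Prop) (P : X -> Prop)
    (f : nat -> X) (up down : Prop) :
  enumerates P f -> (forall i, le (f i) (f i)) ->
  (forall i j, i < j -> le (f i) (f j) <-> up) ->
  (forall i j, j < i -> le (f i) (f j) <-> down) ->
  admissible_part le P.
Proof.
move=> enum_f refl upE downE; have [_ rangeP] := enum_f.
have leE i j : le (f i) (f j) <-> i = j \/ (i < j /\ up) \/ (j < i /\ down).
  case: (ltngtP i j) => [lt|gt|<-].
  - by rewrite upE //; intuition lia.
  - by rewrite downE //; intuition lia.
  - by split=> _; [left | apply: refl].
have onP (R : X -> X -> Prop) :
    (forall i j, R (f i) (f j)) -> forall x y, P x -> P y -> R x y.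
  by move=> Rf x y /rangeP[i <-] /rangeP[j <-].
case: (pselect up) => hup; case: (pselect down) => hdown.
- do 4 right; split; first by exists f.
  apply: onP => i j; apply/leE.
  by case: (ltngtP i j) => [_|_|->]; [right; left | right; right | left].
- right; left; exists f; split=> // i j; rewrite leE.
  by case: (ltngtP i j); intuition lia.
- do 2 right; left; exists f; split=> // i j; rewrite leE.
  by case: (ltngtP i j); intuition lia.
- do 3 right; left; split; first by exists f.
  by apply: onP => i j /leE; intuition congruence.
Qed.

Section UnaryPresentation.

Variables (X : Type) (le : X -> X -> Prop) (L : nat -> Prop) (phi : nat -> X) (N P : nat).
Hypothesis le_refl : forall x, le x x.
Hypothesis phi_onto : forall x, exists n, L n /\ phi n = x.
Hypothesis P_gt0 : 0 < P.
Hypothesis le_NP : N <= P.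
Hypothesis L_periodic : eventually_periodic L N P.
Hypothesis eq_periodic : conv_periodic (fun m n => L m /\ L n /\ phi m = phi n) N P.
Hypothesis le_periodic : conv_periodic (fun m n => L m /\ L n /\ le (phi m) (phi n)) N P.

Local Notation threshold := (2 * N + P).

Definition least_rep n := L n /\ forall m, m < n -> L m -> phi m <> phi n.

Lemma least_rep_inj a b : least_rep a -> least_rep b -> phi a = phi b -> a = b.
Proof.
move=> [La fresh_a] [Lb fresh_b] eq_ab; case: (ltngtP a b) => // lt.
- by case: (fresh_b a lt La).
- by case: (fresh_a b lt Lb).
Qed.

Lemma least_rep_exists n : L n -> exists m, least_rep m /\ phi m = phi n.
Proof.
elim/ltn_ind: n => n IH Ln.
case: (pselect (exists m, m < n /\ L m /\ phi m = phi n)) => [[m [lt_m [Lm <-]]]|].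
- exact: IH.
- by move=> fresh; exists n; split=> //; split=> // m lt_m Lm eq_m; apply: fresh; exists m.
Qed.

(* A smaller representative of [n + P] is either shifted down by [P] along the
   diagonal or, when it is below [N + P], kept fixed on the left. *)
Lemma least_rep_periodic : eventually_periodic least_rep threshold P.
Proof.
have [diag [_ right]] := eq_periodic.
move=> n le_Tn; have LnP : L (n + P) <-> L n by apply: L_periodic; lia.
rewrite /least_rep LnP; split=> -[Ln fresh]; split=> // m lt_m Lm eq_m.
- case: (leqP N m) => le_Nm.
  + have [LmP [_ eq_mP]] := (diag m n ltac:(lia)).2 (conj Lm (conj Ln eq_m)).
    exact: (fresh (m + P) ltac:(lia) LmP eq_mP).
  + have [_ [_ eq_mP]] := (right m n ltac:(lia)).2 (conj Lm (conj Ln eq_m)).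
    exact: (fresh m ltac:(lia) Lm eq_mP).
- have {}LnP : L (n + P) by apply/LnP.
  case: (leqP (N + P) m) => le_m.
  + have em : m = m - P + P by lia.
    rewrite em in Lm eq_m.
    have [Lm' [_ eq_m']] := (diag (m - P) n ltac:(lia)).1 (conj Lm (conj LnP eq_m)).
    exact: (fresh (m - P) ltac:(lia) Lm' eq_m').
  + have [_ [_ eq_m']] := (right m n ltac:(lia)).1 (conj Lm (conj LnP eq_m)).
    exact: (fresh m ltac:(lia) Lm eq_m').
Qed.

Definition residue_index n :=
  if n < threshold then n else threshold + (n - threshold) %% P.

Lemma residue_index_lt n : residue_index n < threshold + P.
Proof.
rewrite /residue_index; case: (ltnP n threshold) => /= lt_n; first lia.
by have := ltn_pmod (n - threshold) P_gt0; lia.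
Qed.

Lemma residue_index_small n j : j < threshold -> residue_index n = j -> n = j.
Proof. by rewrite /residue_index; case: (ltnP n threshold) => /= lt_n; lia. Qed.

Lemma residue_index_progression n j :
  threshold <= j < threshold + P -> residue_index n = j <-> exists i, n = j + i * P.
Proof.
move=> /andP[le_Tj lt_j]; rewrite /residue_index; split.
- case: (ltnP n threshold) => /= [lt_n|le_Tn]; first lia.
  move=> <-; exists ((n - threshold) %/ P).
  by have := divn_eq (n - threshold) P; lia.
- move=> [i ->]; case: (ltnP (j + i * P) threshold) => /= lt_n; first lia.
  have -> : j + i * P - threshold = i * P + (j - threshold) by lia.
  by rewrite modnMDl modn_small; lia.
Qed.

Definition residue_part j x := exists n, least_rep n /\ residue_index n = j /\ phi n = x.

Lemma residue_part_cover x : exists j, j < threshold + P /\ residue_part j x.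
Proof.
have [n [Ln <-]] := phi_onto x; have [m [rep_m <-]] := least_rep_exists Ln.
by exists (residue_index m); split; [exact: residue_index_lt | exists m].
Qed.

Lemma residue_part_disjoint j j' x : residue_part j x -> residue_part j' x -> j = j'.
Proof.
move=> [n [rep_n [<- eq_n]]] [n' [rep_n' [<- eq_n']]].
by rewrite (least_rep_inj rep_n rep_n') // eq_n eq_n'.
Qed.

Lemma residue_part_admissible j :
  j < threshold + P -> (exists x, residue_part j x) -> admissible_part le (residue_part j).
Proof.
move=> lt_j [x0 [n0 [rep_n0 [idx_n0 _]]]].
case: (ltnP j threshold) => [small|large].
  left; exists (phi j) => y; split=> [[n [_ [/residue_index_small -> // <-]]]|->].
  by exists n0; rewrite -[in phi j](residue_index_small small idx_n0).
have progE n : residue_index n = j <-> exists i, n = j + i * P.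
  by apply: residue_index_progression; rewrite large.
have rep_j i : least_rep (j + i * P).
  have [i0 eq_n0] := (progE n0).1 idx_n0.
  have periodic := eventually_periodicM least_rep_periodic.
  by apply/periodic => //; apply/(periodic j i0) => //; rewrite -eq_n0.
pose S m n := L m /\ L n /\ le (phi m) (phi n).
have leS a b : le (phi (j + a * P)) (phi (j + b * P)) <-> S (j + a * P) (j + b * P).
  by split=> [le_ab | [_ [_ //]]]; split; [exact: (rep_j a).1 | split=> //; exact: (rep_j b).1].
apply: (admissible_of_sign_order (f := fun i => phi (j + i * P))
          (up := S j (j + P)) (down := S (j + P) j)) => // [|i i' lt_i|i i' lt_i].
- split=> [a b /(least_rep_inj (rep_j a) (rep_j b)) /eqP|y].
    by rewrite eqn_add2l eqn_mul2r eqn0Ngt P_gt0 => /eqP.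
  split=> [[n [_ [/progE[i ->] <-]]]|[i <-]]; first by exists i.
  by exists (j + i * P); split=> //; split=> //; apply/progE; exists i.
- rewrite leS; apply: (conv_periodic_progression le_periodic) => //; lia.
- rewrite leS; apply: (conv_periodic_progression (conv_periodic_flip le_periodic)) => //; lia.
Qed.

Lemma residue_partition : exists k part, partition_by (admissible_part le) k part.
Proof.
apply: (partition_by_nonempty (k := threshold + P) (Q := residue_part)).
- exact: residue_part_cover.
- by move=> j j' x _ _; apply: residue_part_disjoint.
- exact: residue_part_admissible.
Qed.

End UnaryPresentation.

Theorem corollary5p9 (X : Type) (le : X -> X -> Prop) :
  quasi_order le -> unary_FA_presentable le ->
  exists (k : nat) (part : nat -> X -> Prop),
    (forall x, exists i, i < k /\ part i x) /\
    (forall i j x, i < k -> j < k -> part i x -> part j x -> i = j) /\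
    (forall i, i < k -> admissible_part le (part i)).
Proof.
move=> [le_refl _] [L [phi [regL [phi_onto [regE regLe]]]]].
have [N1 L_periodic] := regular_unary_periodic regL.
have [N2 eq_periodic] := regular_conv_periodic regE.
have [N3 le_periodic] := regular_conv_periodic regLe.
pose N := N1 + N2 + N3.
apply: (residue_partition le_refl phi_onto (fact_gt0 N) (fact_geq N)).
- by apply: L_periodic; lia.
- by apply: eq_periodic; lia.
- by apply: le_periodic; lia.
Qed.
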